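(* Let $d,a,b$ be positive integers, $r=(d+2b)/d$, $R=(a+d)/d$, with $R\ge3r$, and let $\rho=x_1-r$ with $x_1$ as in the context. On the upper semicircle $t(x)=x+i\sqrt{\rho^2-(x-r)^2}$, $r-\rho\le x\le r+\rho$, the function $x\mapsto\Phi(t(x))$ is strictly increasing (for $x$ where $t(x)\ne r$, i.e. on the whole semicircle).
   Context: For $t\in\mathbb C\setminus\{\pm1,\pm r\}$ let $\Phi(t)=d\log|t+r|-d\log|t-r|+(a+d)(\log|t-1|-\log|t+1|)$. Under $R\ge3r$ there is a unique $x_1\in(r,\infty)$ with $\Phi(x_1)=0$. *)

(* classical reals. Complex numbers t = u + i v are represented
   by their real and imaginary parts (u, v); |t - c| for real c is
   sqrt ((u - c)^2 + v^2). *)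
From Stdlib Require Import Reals.
Open Scope R_scope.

Definition cabs_shift (u v c : R) : R := sqrt ((u - c) ^ 2 + v ^ 2).

(* Phi(t) = d log|t+r| - d log|t-r| + (a+d)(log|t-1| - log|t+1|), t = u + i v *)
Definition Phi (d a r u v : R) : R :=
  d * ln (cabs_shift u v (- r)) - d * ln (cabs_shift u v r)
  + (a + d) * (ln (cabs_shift u v 1) - ln (cabs_shift u v (-1))).

Definition semi_im (r rho x : R) : R := sqrt (rho ^ 2 - (x - r) ^ 2).

(* On the real axis, [Phi (x1) = 0] with [R >= 3 r] forces [x1 < 2 r - 1], i.e. [rho < r - 1]:
   bounding [ln ((x+r)/(x-r))] through [ln y <= y - 1] shows it is less than
   [3 r ln ((x+1)/(x-1))] as soon as [x >= 2 r - 1].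
   On the circle of radius [rho] about [r], the squared distance from [t(x)] to a real
   point [c] is the affine function [rho^2 + (r - c) (2 x - r - c)] of [x].  Hence
   [2 Phi(t(x))] is [d ln (rho^2 + 4 r x) - d ln rho^2] plus [(a + d)] times the log of a
   ratio of two affine functions, which is increasing exactly when [rho^2 < r^2 - 1]. *)
From Stdlib Require Import Reals Lra Psatz.
Open Scope R_scope.

Lemma ln_le_sub_1 (y : R) : 0 < y -> ln y <= y - 1.
Proof.
  intros Hy. pose proof (exp_ineq1_le (ln y)) as H.
  rewrite exp_ln in H by exact Hy. lra.
Qed.

Lemma ln_sub_ln_le (p q : R) : 0 < p -> 0 < q -> ln p - ln q <= p / q - 1.
Proof.
  intros Hp Hq.
  assert (Hpq : 0 < p / q) by (apply Rdiv_lt_0_compat; assumption).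
  pose proof (ln_le_sub_1 _ Hpq) as H. unfold Rdiv in H.
  rewrite ln_mult, ln_Rinv in H by (try apply Rinv_0_lt_compat; assumption). lra.
Qed.

Lemma ln_sub_ln_lt_of_cross (p q p' q' : R) :
  0 < p -> 0 < q -> 0 < p' -> 0 < q' -> p * q' < p' * q ->
  ln p - ln q < ln p' - ln q'.
Proof.
  intros Hp Hq Hp' Hq' Hcross.
  assert (H : ln (p * q') < ln (p' * q)) by (apply ln_increasing; nra).
  rewrite !ln_mult in H by assumption. lra.
Qed.

Definition sqdist (u v c : R) : R := (u - c) ^ 2 + v ^ 2.

Lemma ln_cabs_shift (u v c : R) :
  0 < sqdist u v c -> ln (cabs_shift u v c) = ln (sqdist u v c) / 2.
Proof.
  intros Hpos. unfold cabs_shift. fold (sqdist u v c).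
  assert (Hs := sqrt_lt_R0 _ Hpos).
  rewrite <- (sqrt_sqrt (sqdist u v c)) at 2 by lra.
  rewrite ln_mult by assumption. lra.
Qed.

Lemma Phi_sqdist (D A r u v : R) :
  0 < sqdist u v (- r) -> 0 < sqdist u v r ->
  0 < sqdist u v 1 -> 0 < sqdist u v (- 1) ->
  Phi D A r u v =
    (D * (ln (sqdist u v (- r)) - ln (sqdist u v r))
     + (A + D) * (ln (sqdist u v 1) - ln (sqdist u v (- 1)))) / 2.
Proof. intros. unfold Phi. rewrite !ln_cabs_shift by assumption. field. Qed.

Lemma ln_sqdist_real (u c : R) : c < u -> ln (sqdist u 0 c) = 2 * ln (u - c).
Proof.
  intros Hcu. unfold sqdist.
  replace ((u - c) ^ 2 + 0 ^ 2) with ((u - c) ^ 2) by ring.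
  rewrite ln_pow by lra. reflexivity.
Qed.

Lemma Phi_real_axis (D A r u : R) : 1 < r -> r < u ->
  Phi D A r u 0 = D * (ln (u + r) - ln (u - r)) - (A + D) * (ln (u + 1) - ln (u - 1)).
Proof.
  intros Hr Hu.
  assert (Hpos : forall c, c < u -> 0 < sqdist u 0 c)
    by (intros c Hc; unfold sqdist; nra).
  rewrite Phi_sqdist by (apply Hpos; lra).
  rewrite !ln_sqdist_real by lra.
  replace (u - - r) with (u + r) by ring. replace (u - -1) with (u + 1) by ring.
  field.
Qed.

Lemma ln_gap_lt (r u : R) : 1 < r -> 2 * r - 1 <= u ->
  ln (u + r) - ln (u - r) < 3 * r * (ln (u + 1) - ln (u - 1)).
Proof.
  intros Hr Hu.
  (* split [(u+r)/(u-r)] as [(u+r)/(u+1) * (u+1)/(u-1) * (u-1)/(u-r)] *)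
  assert (H1 := ln_sub_ln_le (u + r) (u + 1) ltac:(lra) ltac:(lra)).
  assert (H2 := ln_sub_ln_le (u - 1) (u - r) ltac:(lra) ltac:(lra)).
  assert (H3 := ln_sub_ln_le (u - 1) (u + 1) ltac:(lra) ltac:(lra)).
  replace ((u + r) / (u + 1) - 1) with ((r - 1) / (u + 1)) in H1 by (field; lra).
  replace ((u - 1) / (u - r) - 1) with ((r - 1) / (u - r)) in H2 by (field; lra).
  replace ((u - 1) / (u + 1) - 1) with (- (2 / (u + 1))) in H3 by (field; lra).
  set (L := ln (u + 1) - ln (u - 1)) in *.
  assert (HL : 2 / (u + 1) <= L) by (unfold L; lra).
  assert (Hsmall : (r - 1) / (u + 1) + (r - 1) / (u - r) < (3 * r - 1) * (2 / (u + 1))).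
  { assert (Hdiff : (3 * r - 1) * (2 / (u + 1)) - ((r - 1) / (u + 1) + (r - 1) / (u - r))
                    = ((5 * r - 1) * (u - r) - (r - 1) * (u + 1)) / ((u + 1) * (u - r)))
      by (field; lra).
    assert (0 < ((5 * r - 1) * (u - r) - (r - 1) * (u + 1)) / ((u + 1) * (u - r))).
    { apply Rdiv_lt_0_compat; [nra | apply Rmult_lt_0_compat; lra]. }
    lra. }
  assert ((3 * r - 1) * (2 / (u + 1)) <= (3 * r - 1) * L)
    by (apply Rmult_le_compat_l; lra).
  unfold L in *. lra.
Qed.

Lemma Phi_real_root_lt (D A r u : R) :
  0 < D -> 1 < r -> 3 * r * D <= A + D -> r < u -> Phi D A r u 0 = 0 -> u < 2 * r - 1.
Proof.
  intros HD Hr HAD Hu Hroot.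
  destruct (Rlt_or_le u (2 * r - 1)) as [Hlt | Hge]; [exact Hlt | exfalso].
  rewrite Phi_real_axis in Hroot by assumption.
  assert (HL : 0 < ln (u + 1) - ln (u - 1))
    by (pose proof (ln_increasing (u - 1) (u + 1)); lra).
  pose proof (ln_gap_lt r u Hr Hge) as Hgap.
  assert (D * (ln (u + r) - ln (u - r)) < D * (3 * r * (ln (u + 1) - ln (u - 1))))
    by (apply Rmult_lt_compat_l; assumption).
  assert (3 * r * D * (ln (u + 1) - ln (u - 1)) <= (A + D) * (ln (u + 1) - ln (u - 1)))
    by (apply Rmult_le_compat_r; lra).
  lra.
Qed.

Definition semi_sqdist (r rho c z : R) : R := rho ^ 2 + (r - c) * (2 * z - r - c).

Lemma sqdist_semicircle (r rho c z : R) : r - rho <= z <= r + rho ->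
  sqdist z (semi_im r rho z) c = semi_sqdist r rho c z.
Proof.
  intros Hz. unfold sqdist, semi_sqdist, semi_im.
  rewrite pow2_sqrt by nra. ring.
Qed.

Lemma semi_sqdist_pos (r rho c z : R) : r - rho <= z <= r + rho -> c < z ->
  0 < semi_sqdist r rho c z.
Proof.
  intros Hz Hcz. rewrite <- sqdist_semicircle by exact Hz.
  unfold sqdist. pose proof (pow2_ge_0 (semi_im r rho z)). nra.
Qed.

Lemma Phi_semicircle (D A r rho z : R) : 0 < rho -> 1 < r - rho -> r - rho <= z <= r + rho ->
  Phi D A r z (semi_im r rho z) =
    (D * (ln (semi_sqdist r rho (- r) z) - ln (semi_sqdist r rho r z))
     + (A + D) * (ln (semi_sqdist r rho 1 z) - ln (semi_sqdist r rho (- 1) z))) / 2.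
Proof.
  intros Hrho Hr Hz.
  assert (Hpos : forall c, c < z -> 0 < sqdist z (semi_im r rho z) c)
    by (intros c Hc; rewrite sqdist_semicircle by exact Hz; apply semi_sqdist_pos; lra).
  assert (Hcenter : 0 < sqdist z (semi_im r rho z) r).
  { rewrite sqdist_semicircle by exact Hz. unfold semi_sqdist.
    replace (r - r) with 0 by ring. nra. }
  rewrite Phi_sqdist by (exact Hcenter || (apply Hpos; lra)).
  rewrite !sqdist_semicircle by exact Hz. reflexivity.
Qed.

Lemma Phi_semicircle_increasing (D A r rho x y : R) :
  0 < D -> 0 <= A -> 0 < rho < r - 1 -> r - rho <= x -> x < y -> y <= r + rho ->
  Phi D A r x (semi_im r rho x) < Phi D A r y (semi_im r rho y).
Proof.
  intros HD HA Hrho Hx Hxy Hy.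
  rewrite !Phi_semicircle by lra.
  assert (Hcenter : semi_sqdist r rho r x = semi_sqdist r rho r y)
    by (unfold semi_sqdist; ring).
  assert (Hfar : ln (semi_sqdist r rho (- r) x) < ln (semi_sqdist r rho (- r) y)).
  { apply ln_increasing; [apply semi_sqdist_pos; lra | unfold semi_sqdist; nra]. }
  assert (Hratio : ln (semi_sqdist r rho 1 x) - ln (semi_sqdist r rho (- 1) x)
                   < ln (semi_sqdist r rho 1 y) - ln (semi_sqdist r rho (- 1) y)).
  { apply ln_sub_ln_lt_of_cross; try (apply semi_sqdist_pos; lra).
    assert (Hcross : semi_sqdist r rho 1 y * semi_sqdist r rho (- 1) x
                     - semi_sqdist r rho 1 x * semi_sqdist r rho (- 1) y
                     = 4 * (y - x) * (r ^ 2 - 1 - rho ^ 2))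
      by (unfold semi_sqdist; ring).
    assert (0 < r ^ 2 - 1 - rho ^ 2) by nra.
    nra. }
  rewrite Hcenter.
  apply Rmult_lt_compat_r; [lra |].
  apply Rplus_lt_compat.
  - apply Rmult_lt_compat_l; lra.
  - apply Rmult_lt_compat_l; lra.
Qed.

Theorem lemma4p11 (d a b : nat) (x1 : R) :
  (0 < d)%nat -> (0 < a)%nat -> (0 < b)%nat ->
  let r := (INR d + 2 * INR b) / INR d in
  let Rb := (INR a + INR d) / INR d in
  Rb >= 3 * r ->
  r < x1 -> Phi (INR d) (INR a) r x1 0 = 0 ->
  let rho := x1 - r in
  forall x y : R,
    r - rho <= x -> x < y -> y <= r + rho ->
    Phi (INR d) (INR a) r x (semi_im r rho x) <
    Phi (INR d) (INR a) r y (semi_im r rho y).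
Proof.
  intros Hd Ha Hb r Rb HR Hx1 Hroot rho x y Hx Hxy Hy.
  pose proof (lt_0_INR d Hd) as HD. pose proof (lt_0_INR a Ha) as HA.
  pose proof (lt_0_INR b Hb) as HB.
  assert (Hr : 1 < r).
  { unfold r. apply (Rmult_lt_reg_r (INR d)); [exact HD |].
    field_simplify; lra. }
  assert (HAD : 3 * r * INR d <= INR a + INR d).
  { unfold Rb in HR. apply Rge_le, (Rmult_le_compat_r (INR d)) in HR; [| lra].
    replace ((INR a + INR d) / INR d * INR d) with (INR a + INR d) in HR by (field; lra).
    lra. }
  clearbody r Rb.
  pose proof (Phi_real_root_lt _ _ _ _ HD Hr HAD Hx1 Hroot).
  apply Phi_semicircle_increasing; unfold rho in *; lra.
Qed.
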